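(* Let $(A_n)_{n\in\mathbb Z^+}$ be a sequence of invertible linear operators on $\mathbb R^d$ that admits a strong exponential dichotomy with respect to a sequence of norms $\|\cdot\|_n$, $n\in\mathbb Z^+$, and projections $P_n$, $n\in\mathbb Z^+$. Let $Y\subset\mathbb R^d$ be any subspace with $\mathbb R^d=\operatorname{Im}P_0\oplus Y$, let $P_0'$ be the projection onto $\operatorname{Im}P_0$ along $Y$, and set $P'_n=\mathcal A(n,0)P'_0\mathcal A(0,n)$ for $n\in\mathbb Z^+$. Then $(A_n)_{n\in\mathbb Z^+}$ admits a strong exponential dichotomy with respect to the norms $\|\cdot\|_n$ and projections $P'_n$, $n\in\mathbb Z^+$.
   Context: $\mathbb Z^+=\{0,1,\dots\}$. $\mathcal A(m,n)=A_{m-1}\cdots A_n$ ($m>n$), $\mathrm{Id}$ ($m=n$), $A_m^{-1}\cdots A_{n-1}^{-1}$ ($m<n$). Strong exponential dichotomy w.r.t. norms $\{\|\cdot\|_n\}$ and projections $P_n$: $A_nP_n=P_{n+1}A_n$ for all $n$, and there exist $K>0$, $a\ge\lambda>0$ with, for $m\ge n$, $x\in\mathbb R^d$, $Q_m=\mathrm{Id}-P_m$: $\|\mathcal A(m,n)P_nx\|_m\le Ke^{-\lambda(m-n)}\|x\|_n$, $\|\mathcal A(n,m)Q_mx\|_n\le Ke^{-\lambda(m-n)}\|x\|_m$, $\|\mathcal A(m,n)x\|_m\le Ke^{a(m-n)}\|x\|_n$, $\|\mathcal A(n,m)x\|_n\le Ke^{a(m-n)}\|x\|_m$. *)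

From HB Require Import structures.
From mathcomp Require Import all_boot all_order all_algebra.
From mathcomp Require Import reals sequences exp.
Set Implicit Arguments. Unset Strict Implicit. Unset Printing Implicit Defensive.
Import Order.TTheory GRing.Theory Num.Theory.
Local Open Scope ring_scope.

Section Defs.
Variables (R : realType) (d : nat).

Fixpoint fwd (A : nat -> 'M[R]_d) (n k : nat) : 'M[R]_d :=
  match k with 0 => 1%:M | k'.+1 => A (n + k')%N *m fwd A n k' end.

Fixpoint bwd (A : nat -> 'M[R]_d) (m k : nat) : 'M[R]_d :=
  match k with 0 => 1%:M | k'.+1 => bwd A m k' *m invmx (A (m + k')%N) end.

Definition cocycle (A : nat -> 'M[R]_d) (m n : nat) : 'M[R]_d :=
  if (n <= m)%N then fwd A n (m - n) else bwd A m (n - m).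

Definition is_norm (N : 'cV[R]_d -> R) : Prop :=
  [/\ forall x, 0 <= N x,
      forall x, N x = 0 -> x = 0,
      forall (c : R) x, N (c *: x) = `|c| * N x
    & forall x y, N (x + y) <= N x + N y].

Definition strong_exp_dichotomy (A : nat -> 'M[R]_d)
    (N : nat -> 'cV[R]_d -> R) (P : nat -> 'M[R]_d) : Prop :=
  (forall n, P n *m P n = P n) /\
  (forall n, A n *m P n = P n.+1 *m A n) /\
  exists K a lam : R, [/\ 0 < K, 0 < lam, lam <= a &
    forall (m n : nat) (x : 'cV[R]_d), (n <= m)%N ->
      [/\ N m (cocycle A m n *m (P n *m x))
            <= K * expR (- (lam * (m - n)%:R)) * N n x,
          N n (cocycle A n m *m ((1%:M - P m) *m x))
            <= K * expR (- (lam * (m - n)%:R)) * N m x,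
          N m (cocycle A m n *m x) <= K * expR (a * (m - n)%:R) * N n x
        & N n (cocycle A n m *m x) <= K * expR (a * (m - n)%:R) * N m x]].

Definition in_im (M : 'M[R]_d) (x : 'cV[R]_d) : Prop := exists y, x = M *m y.

Definition is_subspace (Y : 'cV[R]_d -> Prop) : Prop :=
  [/\ Y 0, forall x y, Y x -> Y y -> Y (x + y) & forall (c : R) x, Y x -> Y (c *: x)].

Definition direct_sum_im (M : 'M[R]_d) (Y : 'cV[R]_d -> Prop) : Prop :=
  (forall x, exists u v, [/\ in_im M u, Y v & x = u + v]) /\
  (forall x, in_im M x -> Y x -> x = 0).

Definition proj_onto_along (Q M : 'M[R]_d) (Y : 'cV[R]_d -> Prop) : Prop :=
  forall u v, in_im M u -> Y v -> Q *m (u + v) = u.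

End Defs.

(* Since P'_0 and P_0 have the same image, P'_0 = P_0 + P_0 P'_0 (1 - P_0); transported
   along the cocycle this gives
     A(m,n) P'_n = A(m,n) P_n + A(m,0) P_0 P'_0 A(0,n) (1 - P_n),
   and similarly for 1 - P'_m.  The correction term passes through time 0, so it is
   bounded by the stable estimate from 0 to m times the unstable one from n back to 0,
   i.e. by K^2 C e^{-lam (m + n)} <= K^2 C e^{-lam (m - n)}, where C is the operator norm
   of P'_0 for the norm at time 0; C is finite because all norms on R^d are equivalent.
   The growth estimates do not involve the projections. *)

From HB Require Import structures.
From mathcomp Require Import all_boot all_order all_algebra.
From mathcomp Require Import reals sequences exp.
From mathcomp Require Import boolp classical_sets topology normedtype derive.
From mathcomp Require Import ring lra.
Set Implicit Arguments. Unset Strict Implicit. Unset Printing Implicit Defensive.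
Import Order.TTheory GRing.Theory Num.Theory.
Import numFieldNormedType.Exports.
Local Open Scope classical_set_scope.
Local Open Scope ring_scope.

Lemma mxentry_le_norm (K : realDomainType) m n (x : 'M[K]_(m, n)) i j :
  `|x i j| <= `|x|.
Proof.
rewrite (_ : `|x| = mx_norm x) // mx_normrE; apply/bigmax_geP; right => /=.
by exists (i, j).
Qed.

Section FinDimNorm.
Variables (R : realType) (d : nat) (N : 'cV[R]_d -> R).
Hypothesis hN : is_norm N.

Lemma is_norm_ge0 x : 0 <= N x. Proof. by case: hN. Qed.

Lemma is_normZ (c : R) x : N (c *: x) = `|c| * N x. Proof. by case: hN. Qed.

Lemma is_normD x y : N (x + y) <= N x + N y. Proof. by case: hN. Qed.

Lemma is_norm0 : N 0 = 0.
Proof. by rewrite -(scale0r (0 : 'cV[R]_d)) is_normZ normr0 mul0r. Qed.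

Lemma is_norm_eq0 x : (N x == 0) = (x == 0).
Proof.
apply/eqP/eqP => [|->]; last exact: is_norm0.
by case: hN => _ + _ _; apply.
Qed.

Lemma is_normN x : N (- x) = N x.
Proof. by rewrite -scaleN1r is_normZ normrN normr1 mul1r. Qed.

Lemma is_normB x y : N (x - y) <= N x + N y.
Proof. by rewrite -(is_normN y) is_normD. Qed.

Lemma is_norm_sum (I : Type) (r : seq I) (f : I -> 'cV[R]_d) :
  N (\sum_(i <- r) f i) <= \sum_(i <- r) N (f i).
Proof.
elim: r => [|i r IH]; first by rewrite !big_nil is_norm0.
by rewrite !big_cons (le_trans (is_normD _ _)) // lerD2l.
Qed.

Lemma is_norm_dist x y : `|N x - N y| <= N (x - y).
Proof.
have := is_normD (x - y) y; have := is_normD (y - x) x.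
by rewrite !subrK -opprB is_normN ler_norml; lra.
Qed.

Lemma is_norm_mulmx_le (M : 'M[R]_d) x :
  N (M *m x) <= (\sum_j N (M *m delta_mx j 0)) * `|x^T|.
Proof.
have xE : x = \sum_j x j 0 *: delta_mx j 0.
  by rewrite {1}[x]matrix_sum_delta; apply: eq_bigr => j _; rewrite big_ord1.
rewrite {1}xE mulmx_sumr.
apply: le_trans (is_norm_sum _ _) _; rewrite mulr_suml; apply: ler_sum => j _.
rewrite -scalemxAr is_normZ mulrC ler_wpM2l ?is_norm_ge0 //.
by have := mxentry_le_norm x^T 0 j; rewrite mxE.
Qed.

Lemma is_norm_tr_continuous : continuous (fun v : 'rV[R]_d => N v^T).
Proof.
set B := \sum_j N (1%:M *m delta_mx j 0).
have B0 : 0 <= B by apply: sumr_ge0 => j _; exact: is_norm_ge0.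
move=> v; apply/(cvgrPdist_lt (FF := nbhs_filter v)) => e e0.
have eB : 0 < e / (B + 1) by rewrite divr_gt0 // ltr_wpDl.
near=> w.
have : ball v (e / (B + 1)) w by near: w; exact: (@near_ball R _ v _ eB).
rewrite -ball_normE /= => vw.
apply: le_lt_trans (is_norm_dist _ _) _.
rewrite -linearB /= -[_^T]mul1mx.
apply: le_lt_trans (is_norm_mulmx_le _ _) _; rewrite trmxK.
apply: (@le_lt_trans _ _ (B * (e / (B + 1)))); first by rewrite ler_wpM2l // ltW.
rewrite mulrA ltr_pdivrMr ?ltr_wpDl // mulrC ltr_pM2l //.
by rewrite ltrDl.
Unshelve. all: by end_near.
Qed.

Lemma is_norm_ge_mx_norm : exists2 c, 0 < c & forall x, c * `|x^T| <= N x.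
Proof.
pose S := [set v : 'rV[R]_d | `|v| = 1].
have normalizeS v : v != 0 -> S (`|v|^-1 *: v).
  by move=> v0; rewrite /S /= normrZ normfV normr_id mulVf ?normr_eq0.
have [[w Sw]|noS] := pselect (exists w, S w); last first.
  (* S is empty only when d = 0 *)
  exists 1 => // x; have [->|x0] := eqVneq x^T 0.
    by rewrite normr0 mulr0 is_norm_ge0.
  by exfalso; apply: noS; exists (`|x^T|^-1 *: x^T); exact: normalizeS.
have cS : compact S.
  apply: bounded_closed_compact.
    by exists 1; split => // M M1 x; rewrite /S /= => ->; exact: ltW.
  apply: (@preimage_closed _ _ (fun v : 'rV[R]_d => `|v|) [set 1]).
    by move=> x _; exact: norm_continuous.
  exact: closed_eq.
have [v0 /set_mem Sv0 hmin] :=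
  compact_EVT_min (ex_intro _ w Sw) cS (continuous_subspaceT is_norm_tr_continuous).
have v0_neq0 : v0^T != 0.
  apply: contra_eqN Sv0 => /eqP/(congr1 trmx); rewrite trmxK trmx0 => ->.
  by rewrite normr0 eq_sym oner_eq0.
exists (N v0^T).
  by rewrite lt_def is_norm_ge0 is_norm_eq0 v0_neq0.
move=> x; have [->|x0] := eqVneq x^T 0; first by rewrite normr0 mulr0 is_norm_ge0.
have := hmin _ (mem_set (normalizeS _ x0)).
rewrite linearZ /= trmxK is_normZ normfV normr_id => h.
by rewrite -ler_pdivlMr ?normr_gt0 // mulrC.
Qed.

Lemma is_norm_mulmx_bounded (M : 'M[R]_d) :
  exists2 C, 0 <= C & forall x, N (M *m x) <= C * N x.
Proof.
have [c c0 hc] := is_norm_ge_mx_norm.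
set BM := \sum_j N (M *m delta_mx j 0).
have BM0 : 0 <= BM by apply: sumr_ge0 => j _; exact: is_norm_ge0.
exists (BM / c) => [|x]; first by rewrite divr_ge0 // ltW.
apply: le_trans (is_norm_mulmx_le M x) _.
by rewrite -mulrA ler_wpM2l // ler_pdivlMl.
Qed.

End FinDimNorm.

Lemma invmxM (R : comUnitRingType) d (M1 M2 : 'M[R]_d) :
  M1 \in unitmx -> M2 \in unitmx -> invmx (M1 *m M2) = invmx M2 *m invmx M1.
Proof.
move=> M1u M2u; have M12u : M1 *m M2 \in unitmx by rewrite unitmx_mul M1u.
have M12K : invmx M2 *m invmx M1 *m (M1 *m M2) = 1%:M.
  by rewrite mulmxA mulmxKV // mulVmx.
by rewrite -[LHS]mul1mx -M12K mulmxK.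
Qed.

Lemma mulmx_cVP (R : fieldType) d (M1 M2 : 'M[R]_d) :
  (forall x : 'cV[R]_d, M1 *m x = M2 *m x) -> M1 = M2.
Proof.
move=> eqM; apply: trmx_inj; apply/eqP/mulmxP => u.
by rewrite -[u]trmxK -!trmx_mul eqM.
Qed.

Section Cocycle.
Variables (R : realType) (d : nat) (A : nat -> 'M[R]_d).
Hypothesis hA : forall n, A n \in unitmx.

Lemma unitmx_fwd n k : fwd A n k \in unitmx.
Proof. by elim: k => [|k IHk] /=; rewrite ?unitmx1 // unitmx_mul hA. Qed.

Lemma fwdE n k : fwd A n k = fwd A 0 (n + k) *m invmx (fwd A 0 n).
Proof.
elim: k => [|k IHk]; first by rewrite addn0 mulmxV ?unitmx_fwd.
by rewrite /= IHk addnS /= add0n mulmxA.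
Qed.

Lemma bwdE m k : bwd A m k = fwd A 0 m *m invmx (fwd A 0 (m + k)).
Proof.
elim: k => [|k IHk]; first by rewrite addn0 mulmxV ?unitmx_fwd.
by rewrite /= IHk addnS /= add0n invmxM ?hA ?unitmx_fwd // mulmxA.
Qed.

Lemma cocycleE m n : cocycle A m n = fwd A 0 m *m invmx (fwd A 0 n).
Proof.
rewrite /cocycle; case: leqP => [nm|mn]; first by rewrite fwdE subnKC.
by rewrite bwdE subnKC // ltnW.
Qed.

Lemma cocycle_mul m k n : cocycle A m k *m cocycle A k n = cocycle A m n.
Proof. by rewrite !cocycleE mulmxA mulmxKV ?unitmx_fwd. Qed.

Lemma cocycle_id n : cocycle A n n = 1%:M.
Proof. by rewrite cocycleE mulmxV ?unitmx_fwd. Qed.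

Lemma cocycleSn n : cocycle A n.+1 n = A n.
Proof. by rewrite cocycleE /= add0n mulmxK ?unitmx_fwd. Qed.

Definition transport (Q : 'M[R]_d) (n : nat) : 'M[R]_d :=
  cocycle A n 0 *m Q *m cocycle A 0 n.

Lemma cocycle_transport m n Q :
  cocycle A m n *m transport Q n = cocycle A m 0 *m Q *m cocycle A 0 n.
Proof. by rewrite /transport !mulmxA cocycle_mul. Qed.

Lemma transport_cocycle m n Q :
  transport Q m *m cocycle A m n = cocycle A m 0 *m Q *m cocycle A 0 n.
Proof. by rewrite /transport -mulmxA cocycle_mul. Qed.

Lemma transportM Q1 Q2 n :
  transport Q1 n *m transport Q2 n = transport (Q1 *m Q2) n.
Proof.
by rewrite /transport !mulmxA -(mulmxA _ (cocycle A 0 n)) cocycle_mul cocycle_id mulmx1.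
Qed.

Lemma transport1 n : transport 1%:M n = 1%:M.
Proof. by rewrite /transport mulmx1 cocycle_mul cocycle_id. Qed.

Lemma transportD Q1 Q2 n :
  transport (Q1 + Q2) n = transport Q1 n + transport Q2 n.
Proof. by rewrite /transport mulmxDr mulmxDl. Qed.

Lemma transportB Q1 Q2 n :
  transport (Q1 - Q2) n = transport Q1 n - transport Q2 n.
Proof. by rewrite /transport mulmxBr mulmxBl. Qed.

Lemma transport_invariant Q n :
  A n *m transport Q n = transport Q n.+1 *m A n.
Proof. by rewrite -cocycleSn cocycle_transport transport_cocycle. Qed.

Lemma invariant_transport (P : nat -> 'M[R]_d) :
  (forall n, A n *m P n = P n.+1 *m A n) -> forall n, P n = transport (P 0) n.
Proof.
move=> Pinv; elim=> [|n IHn]; first by rewrite /transport cocycle_id mul1mx mulmx1.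
by rewrite -[P n.+1](mulmxK (hA n)) -Pinv IHn transport_invariant mulmxK.
Qed.

End Cocycle.

Lemma decay_product_le (R : realType) (K C lam X : R) (p q r : nat) :
  0 <= K -> 0 <= C -> 0 <= lam -> 0 <= X -> (r <= p + q)%N ->
  K * expR (- (lam * p%:R)) * (C * (K * expR (- (lam * q%:R)) * X))
    <= C * K ^+ 2 * expR (- (lam * r%:R)) * X.
Proof.
move=> K0 C0 lam0 X0 rpq.
have -> : K * expR (- (lam * p%:R)) * (C * (K * expR (- (lam * q%:R)) * X))
    = C * K ^+ 2 * expR (- (lam * (p + q)%:R)) * X.
  by rewrite natrD mulrDr opprD expRD expr2; ring.
rewrite ler_wpM2r // ler_wpM2l ?mulr_ge0 ?exprn_ge0 //.
by rewrite ler_expR lerN2 ler_wpM2l // ler_nat.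
Qed.

Lemma proj_same_image_decomp (R : comRingType) d (p q : 'M[R]_d) :
  q *m p = p -> p *m q = q -> q = p + p *m q *m (1%:M - p).
Proof. by move=> qp pq; rewrite pq mulmxBr mulmx1 qp addrC subrK. Qed.

Section ChangeOfProjection.
Variables (R : realType) (d : nat) (A : nat -> 'M[R]_d).
Variables (N : nat -> 'cV[R]_d -> R) (P : nat -> 'M[R]_d) (Q : 'M[R]_d).
Hypothesis hA : forall n, A n \in unitmx.
Hypothesis hN : forall n, is_norm (N n).
Hypothesis Pinv : forall n, A n *m P n = P n.+1 *m A n.
Hypotheses (QP : Q *m P 0 = P 0) (PQ : P 0 *m Q = Q).

Local Notation P' := (transport A Q).

Lemma transport_split n :
  P' n = P n + transport A (P 0 *m Q) n *m (1%:M - P n).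
Proof.
rewrite [P n](invariant_transport hA Pinv) -(transport1 hA n) -transportB.
by rewrite transportM // -transportD -proj_same_image_decomp.
Qed.

Lemma stable_part_split m n (x : 'cV[R]_d) :
  cocycle A m n *m (P' n *m x) = cocycle A m n *m (P n *m x)
    + cocycle A m 0 *m (P 0 *m (Q *m (cocycle A 0 n *m ((1%:M - P n) *m x)))).
Proof.
rewrite transport_split [in LHS]mulmxDl [in LHS]mulmxDr; congr (_ + _).
by rewrite /transport !mulmxA cocycle_mul.
Qed.

Lemma unstable_part_split m n (x : 'cV[R]_d) :
  cocycle A n m *m ((1%:M - P' m) *m x) = cocycle A n m *m ((1%:M - P m) *m x)
    - cocycle A n 0 *m (P 0 *m (Q *m (cocycle A 0 m *m ((1%:M - P m) *m x)))).
Proof.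
rewrite transport_split opprD addrA [in LHS]mulmxBl [in LHS]mulmxBr; congr (_ - _).
by rewrite /transport !mulmxA cocycle_mul.
Qed.

Variables (K lam C : R).
Hypotheses (K0 : 0 <= K) (lam0 : 0 <= lam) (C0 : 0 <= C).
Hypothesis hC : forall x, N 0 (Q *m x) <= C * N 0 x.
Hypothesis stable : forall m n x, (n <= m)%N ->
  N m (cocycle A m n *m (P n *m x)) <= K * expR (- (lam * (m - n)%:R)) * N n x.
Hypothesis unstable : forall m n x, (n <= m)%N ->
  N n (cocycle A n m *m ((1%:M - P m) *m x))
    <= K * expR (- (lam * (m - n)%:R)) * N m x.

Lemma correction_bound i j k z (X : R) :
  0 <= X -> (k <= i + j)%N -> N 0 z <= K * expR (- (lam * j%:R)) * X ->
  N i (cocycle A i 0 *m (P 0 *m (Q *m z)))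
    <= C * K ^+ 2 * expR (- (lam * k%:R)) * X.
Proof.
move=> X0 kij hz.
apply: le_trans (stable _ (leq0n i)) _; rewrite subn0.
apply: le_trans (decay_product_le K0 C0 lam0 X0 kij).
rewrite ler_wpM2l ?mulr_ge0 ?expR_ge0 //.
by apply: le_trans (hC z) _; rewrite ler_wpM2l.
Qed.

Lemma transport_stable m n x : (n <= m)%N ->
  N m (cocycle A m n *m (P' n *m x))
    <= (K + C * K ^+ 2) * expR (- (lam * (m - n)%:R)) * N n x.
Proof.
move=> nm; rewrite stable_part_split !mulrDl.
apply: le_trans (is_normD (hN m) _ _) _; apply: lerD; first exact: stable.
apply: correction_bound (is_norm_ge0 (hN n) x) _ _.
  exact: leq_trans (leq_subr n m) (leq_addr n m).
by have := unstable x (leq0n n); rewrite subn0.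
Qed.

Lemma transport_unstable m n x : (n <= m)%N ->
  N n (cocycle A n m *m ((1%:M - P' m) *m x))
    <= (K + C * K ^+ 2) * expR (- (lam * (m - n)%:R)) * N m x.
Proof.
move=> nm; rewrite unstable_part_split !mulrDl.
apply: le_trans (is_normB (hN n) _ _) _; apply: lerD; first exact: unstable.
apply: correction_bound (is_norm_ge0 (hN m) x) _ _.
  exact: leq_trans (leq_subr n m) (leq_addl n m).
by have := unstable x (leq0n m); rewrite subn0.
Qed.

End ChangeOfProjection.

Theorem strong_exp_dichotomy_transport (R : realType) (d : nat)
    (A : nat -> 'M[R]_d) (N : nat -> 'cV[R]_d -> R) (P : nat -> 'M[R]_d)
    (Q : 'M[R]_d) :
  (forall n, A n \in unitmx) -> (forall n, is_norm (N n)) ->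
  strong_exp_dichotomy A N P -> Q *m P 0 = P 0 -> P 0 *m Q = Q ->
  strong_exp_dichotomy A N (transport A Q).
Proof.
move=> hA hN [_ [Pinv [K [a [lam [K0 lam0 lama hb]]]]]] QP PQ.
have [C C0 hC] := is_norm_mulmx_bounded (hN 0) Q.
have stable m n x nm := let: And4 h _ _ _ := hb m n x nm in h.
have unstable m n x nm := let: And4 _ h _ _ := hb m n x nm in h.
have KC0 : 0 < K + C * K ^+ 2 by rewrite ltr_wpDr ?mulr_ge0 ?exprn_ge0 // ltW.
have widen t X : 0 <= X -> K * expR t * X <= (K + C * K ^+ 2) * expR t * X.
  move=> X0; rewrite ler_wpM2r // ler_wpM2r ?expR_ge0 //.
  by rewrite lerDl mulr_ge0 ?exprn_ge0 // ltW.
split=> [n|]; first by rewrite transportM // -{2}PQ mulmxA QP PQ.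
split=> [n|]; first exact: transport_invariant.
exists (K + C * K ^+ 2), a, lam; split=> // m n x nm.
have [_ _ grow_fwd grow_bwd] := hb m n x nm.
split.
- exact: (transport_stable hA hN Pinv QP PQ (ltW K0) (ltW lam0) C0 hC stable unstable).
- exact: (transport_unstable hA hN Pinv QP PQ (ltW K0) (ltW lam0) C0 hC stable unstable).
- exact: le_trans grow_fwd (widen _ _ (is_norm_ge0 (hN n) x)).
- exact: le_trans grow_bwd (widen _ _ (is_norm_ge0 (hN m) x)).
Qed.

Lemma mulmx_proj_onto_along_im (R : realType) d (Q M : 'M[R]_d)
    (Y : 'cV[R]_d -> Prop) :
  Y 0 -> proj_onto_along Q M Y -> Q *m M = M.
Proof.
move=> Y0 hQ; apply: mulmx_cVP => x.
by rewrite -mulmxA -{1}[M *m x]addr0 hQ //; exists x.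
Qed.

Lemma mulmx_im_proj_onto_along (R : realType) d (Q M : 'M[R]_d)
    (Y : 'cV[R]_d -> Prop) :
  M *m M = M -> (forall x, exists u v, [/\ in_im M u, Y v & x = u + v]) ->
  proj_onto_along Q M Y -> M *m Q = Q.
Proof.
move=> Midem hdec hQ; apply: mulmx_cVP => x.
have [_ [v [[y ->] Yv ->]]] := hdec x.
by rewrite -mulmxA hQ ?mulmxA ?Midem //; exists y.
Qed.

Theorem corollary7p1 (R : realType) (d : nat) (A : nat -> 'M[R]_d)
    (N : nat -> 'cV[R]_d -> R) (P : nat -> 'M[R]_d)
    (Y : 'cV[R]_d -> Prop) (P0' : 'M[R]_d) :
  (forall n, A n \in unitmx) ->
  (forall n, is_norm (N n)) ->
  strong_exp_dichotomy A N P ->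
  is_subspace Y ->
  direct_sum_im (P 0%N) Y ->
  proj_onto_along P0' (P 0%N) Y ->
  strong_exp_dichotomy A N
    (fun n => cocycle A n 0 *m P0' *m cocycle A 0 n).
Proof.
move=> hA hN hP [Y0 _ _] [hdec _] hQ.
apply: (strong_exp_dichotomy_transport hA hN hP).
  exact: mulmx_proj_onto_along_im hQ.
by apply: mulmx_im_proj_onto_along hdec hQ; case: hP.
Qed.
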